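(* Let $\mathcal{O}$ be an oriented matroid of rank $r$ on $E$, $f\in E$, $I=[e_1,\dots,e_k]$ ($k\le r$) an ordered set of independent elements (possibly $f\in I$), and $\mathcal{O}'=\mathcal{O}\cup p=\mathcal{O}[e_1^+,\dots,e_k^+]$. Let $X,Y$ be conformal cocircuits of $\mathcal{O}'$ with $X_p=Y_p\neq 0$ and $X\circ Y$ an edge of $\mathcal{O}'$, and suppose both $X$ and $Y$ have index $i$ with respect to $I$, where $1\le i\le k$ and $f\ne e_i$ (so $X_{e_i}=Y_{e_i}\ne0$). If $X_f\neq Y_f$, or $X_f=Y_f=0$, or $\mathrm{Dir}_{(\mathcal{O}',e_i,f)}(X,Y)\neq 0$, then $\mathrm{Dir}_{(\mathcal{O}',e_i,f)}(X,Y)=\mathrm{Dir}_{(\mathcal{O}',p,f)}(X,Y)$, and, whenever $X_f=Y_f\neq 0$, also $\mathrm{Dir}_{(\mathcal{O}',f,e_i)}(X,Y)=\mathrm{Dir}_{(\mathcal{O}',f,p)}(X,Y)$.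
   Context: Oriented matroid $\mathcal{O}$ of rank $r$ on finite $E$, given by its cocircuits (sign vectors in $\{+,-,0\}^E$). Notation: $z(X)$ zero set, $\operatorname{sep}(X,Y)=\{e:X_e=-Y_e\ne0\}$, $(X\circ Y)_e=X_e$ if $X_e\ne0$, else $Y_e$; conformal means $\operatorname{sep}=\emptyset$. An edge is a covector whose zero set is a flat of rank $r-2$; cocircuits $X\ne\pm Y$ are comodular if $X\circ Y$ is an edge. For comodular $X,Y$ and $e\in\operatorname{sep}(X,Y)$, cocircuit elimination of $e$ between $X$ and $Y$ yields the unique cocircuit $Z$ with $Z_e=0$ and $Z_h=(X\circ Y)_h$ for $h\notin\operatorname{sep}(X,Y)$. For an oriented matroid $\mathcal{Q}$ on ground set $E'$, distinct $a,b\in E'$ and comodular cocircuits $X,Y$ of $\mathcal{Q}$ with $X_a=Y_a\ne0$, let $Z$ be obtained by eliminating $a$ between $-X$ and $Y$ and set $\mathrm{Dir}_{(\mathcal{Q},a,b)}(X,Y)=Z_b$; if $X_a\ne0$ and $Y_a=0$ set $\mathrm{Dir}_{(\mathcal{Q},a,b)}(X,Y)=Y_b$, and if $X_a=0$, $Y_a\neq 0$ set it to $-X_b$. The index of a cocircuit $Y$ w.r.t. $I=[e_1,\dots,e_k]$ is the smallest $i$ with $Y_{e_i}\ne0$, or $k+1$ if none. The positive lexicographic extension $\mathcal{O}[e_1^+,\dots,e_k^+]=\mathcal{O}\cup p$ is the single-element extension with localization $\sigma(Y)=Y_{e_i}$ if the index $i$ of $Y$ is $\le k$, and $\sigma(Y)=0$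 otherwise. *)

From mathcomp Require Import all_boot.
Set Implicit Arguments. Unset Strict Implicit. Unset Printing Implicit Defensive.

(* Signs: None = 0, Some true = +, Some false = - *)
Definition sign := option bool.
Definition sopp (s : sign) : sign := omap negb s.

Section SignVectors.
Variable T : finType.

Local Notation svec := {ffun T -> sign}.

Definition vzero : svec := [ffun _ => None].
Definition vopp (X : svec) : svec := [ffun e => sopp (X e)].
Definition zset (X : svec) : {set T} := [set e | X e == None].
Definition supp (X : svec) : {set T} := [set e | X e != None].
Definition sep (X Y : svec) : {set T} :=
  [set e | (X e != None) && (X e == sopp (Y e))].
Definition vcomp (X Y : svec) : svec :=
  [ffun e => if X e is Some b then Some b else Y e].
Definition conformal (X Y : svec) : bool := sep X Y == set0.

Definition is_OM (C : {set svec}) : Prop :=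
  [/\ vzero \notin C,
      forall X, X \in C -> vopp X \in C,
      forall X Y, X \in C -> Y \in C -> supp X \subset supp Y ->
        X = Y \/ X = vopp Y &
      forall X Y e, X \in C -> Y \in C -> X != vopp Y -> e \in sep X Y ->
        exists2 Z, Z \in C &
          Z e = None /\ forall g, Z g != None -> Z g = X g \/ Z g = Y g].

Definition spanning (C : {set svec}) (S : {set T}) : bool :=
  [forall X in C, ~~ [disjoint S & supp X]].
Definition basis (C : {set svec}) (B : {set T}) : bool :=
  spanning C B && [forall B' : {set T}, (B' \proper B) ==> ~~ spanning C B'].
Definition indep (C : {set svec}) (A : {set T}) : bool :=
  [exists B : {set T}, basis C B && (A \subset B)].
Definition rank (C : {set svec}) (A : {set T}) : nat :=
  \max_(B : {set T} | indep C B && (B \subset A)) #|B|.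
Definition rankOM (C : {set svec}) : nat := rank C [set: T].

Inductive covector (C : {set svec}) : svec -> Prop :=
| covector0 : covector C vzero
| covectorS X Y : X \in C -> covector C Y -> covector C (vcomp X Y).

Definition edge (C : {set svec}) (W : svec) : Prop :=
  covector C W /\ rank C (zset W) + 2 = rankOM C.

Definition comodular (C : {set svec}) (X Y : svec) : Prop :=
  [/\ X \in C, Y \in C, X <> Y, X <> vopp Y & edge C (vcomp X Y)].

(* Cocircuit elimination of e between comodular X and Y: the (unique)
   cocircuit Z with Z_e = 0 and Z_h = (X o Y)_h for h notin sep(X,Y). *)
Definition elim (C : {set svec}) (X Y : svec) (e : T) : option svec :=
  [pick Z in C | (Z e == None) &&
     [forall h, (h \notin sep X Y) ==> (Z h == vcomp X Y h)]].

(* Dir_(C,a,b)(X,Y); returns 0 in the cases where the paper leaves it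
   undefined (X_a = -Y_a <> 0, or X_a = Y_a = 0). *)
Definition Dir (C : {set svec}) (a b : T) (X Y : svec) : sign :=
  if X a != None then
    if Y a == X a then
      (if elim C (vopp X) Y a is Some Z then Z b else None)
    else if Y a == None then Y b else None
  else if Y a != None then sopp (X b) else None.

End SignVectors.

Notation svec T := {ffun T -> sign}.

Arguments vzero {T}.

(* Single-element extensions: ground set option E, the new element p is None *)
Section Extension.
Variable E : finType.

Definition restr (W : svec (option E)) : svec E := [ffun e => W (Some e)].
Definition extv (Y : svec E) (s : sign) : svec (option E) :=
  [ffun o => if o is Some e then Y e else s].

(* C' is the cocircuit set of a single-element extension O' = O u p of the
   oriented matroid with cocircuits C, with localization sigma:
   O' is an oriented matroid, O' \ p = O (cocircuits of the deletion are the
   support-minimal nonzero restrictions), and (Y, sigma Y) is a cocircuit of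
   O' for every cocircuit Y of O. *)
Definition single_ext (C : {set svec E}) (C' : {set svec (option E)})
    (sigma : svec E -> sign) : Prop :=
  [/\ is_OM C',
      (forall Y, Y \in C <->
        [/\ Y != vzero,
            exists2 W, W \in C' & restr W = Y &
            forall W, W \in C' -> supp (restr W) \proper supp Y ->
              restr W = vzero]) &
      forall Y, Y \in C -> extv Y (sigma Y) \in C'].

(* Localization of the positive lexicographic extension O[e1+,...,ek+] *)
Definition lexsig (I : seq E) (Y : svec E) : sign :=
  nth None [seq Y e | e <- I] (find (fun e => Y e != None) I).

(* 1-based index of a cocircuit of O' w.r.t. I (k+1 if none) *)
Definition cindex (I : seq E) (X : svec (option E)) : nat :=
  (find (fun e => X (Some e) != None) I).+1.

End Extension.

From mathcomp Require Import all_boot.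
From mathcomp Require Import zify.
Set Implicit Arguments. Unset Strict Implicit. Unset Printing Implicit Defensive.

(* Every cocircuit in the argument vanishes on the coline L = z(X o Y), and two cocircuits
   vanishing on L and on one more element outside L agree up to sign. Hence the eliminations
   Z_i of e_i and Z_p of p between -X and Y coincide as soon as Z_i vanishes at p or Z_p at
   e_i. A cocircuit V vanishing on L with V_p and V_{e_i} nonzero restricts to a cocircuit
   of O vanishing on e_1, ..., e_{i-1} (these lie in L), so the lexicographic localization
   forces V_p = V_{e_i}. Applied to the elimination of f between Z_i and Z_p, this shows
   that opposite signs of Z_i and Z_p at f would give Z_i(p) = Z_p(e_i), which a further
   elimination of p between Z_i and -X or Y rules out. If only one of Z_i, Z_p vanishes at
   f, the restriction of Z_p, resp. the hypothesis on f, gives a contradiction. The second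
   identity is the same parallelism applied to the elimination of f. *)

Lemma soppK : involutive sopp. Proof. by case=> [[]|]. Qed.

Lemma sopp_eq0 s : (sopp s == None) = (s == None). Proof. by case: s. Qed.

Lemma sopp_fix s : sopp s = s -> s = None. Proof. by case: s => [[]|]. Qed.

Lemma sopp_of_neq (s t : sign) : s != None -> t != None -> s != t -> s = sopp t.
Proof. by case: s => [[]|]; case: t => [[]|]. Qed.

Section SignVectors.
Variable T : finType.
Implicit Types Z : svec T.

Lemma voppE Z x : vopp Z x = sopp (Z x). Proof. by rewrite ffunE. Qed.

Lemma voppK : involutive (@vopp T).
Proof. by move=> Z; apply/ffunP=> x; rewrite !ffunE soppK. Qed.

Lemma supp_vopp Z : supp (vopp Z) = supp Z.
Proof. by apply/setP=> x; rewrite !inE voppE sopp_eq0. Qed.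

Lemma in_zset Z x : (x \in zset Z) = (Z x == None). Proof. by rewrite inE. Qed.

Lemma in_supp Z x : (x \in supp Z) = (Z x != None). Proof. by rewrite inE. Qed.

Lemma in_sep_vopp Z1 Z2 x :
  (x \in sep (vopp Z1) Z2) = (Z1 x != None) && (Z1 x == Z2 x).
Proof.
rewrite inE !voppE sopp_eq0; case: (Z1 x) => // b; case: (Z2 x) => [c|] //=.
by case: b; case: c.
Qed.

Lemma zset_vopp Z : zset (vopp Z) = zset Z.
Proof. by apply/setP=> x; rewrite !inE voppE sopp_eq0. Qed.

Definition eq_pm Z1 Z2 := Z1 = Z2 \/ Z1 = vopp Z2.

Lemma eq_pm_eq0 Z1 Z2 : eq_pm Z1 Z2 -> forall x, (Z1 x == None) = (Z2 x == None).
Proof. by case=> -> x; rewrite ?voppE ?sopp_eq0. Qed.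

Lemma agree_supp Z Z1 Z2 : (forall g, Z g != None -> Z g = Z1 g \/ Z g = Z2 g) ->
  supp Z \subset supp Z1 :|: supp Z2.
Proof.
by move=> HZ; apply/subsetP=> g; rewrite !inE => Zg; case: (HZ g Zg) => <-; rewrite Zg ?orbT.
Qed.

End SignVectors.

Lemma not_eq_pm_at (T : finType) (Z1 Z2 : svec T) x :
  Z1 x = None -> Z2 x != None -> ~ eq_pm Z1 Z2 /\ ~ eq_pm Z2 Z1.
Proof.
by move=> Z1x Z2x; split=> /eq_pm_eq0 /(_ x); rewrite Z1x eqxx (negbTE Z2x).
Qed.

Section OrientedMatroid.
Variables (T : finType) (C : {set svec T}).
Hypothesis HOM : is_OM C.
Implicit Types Z : svec T.

Lemma cocircuit_vopp Z : Z \in C -> vopp Z \in C.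
Proof. by case: HOM => _ H _ _; apply: H. Qed.

Lemma cocircuit_neq0 Z : Z \in C -> exists x, Z x != None.
Proof.
case: HOM => C0 _ _ _ ZC; apply/existsP; apply: contraT => /existsPn Z0.
suff Zvzero : Z = vzero by move: C0; rewrite -Zvzero ZC.
by apply/ffunP=> x; rewrite ffunE; apply/eqP; move: (Z0 x); rewrite negbK.
Qed.

Lemma cocircuit_supp_eq_pm Z1 Z2 : Z1 \in C -> Z2 \in C ->
  supp Z1 \subset supp Z2 -> eq_pm Z1 Z2.
Proof. by case: HOM => _ _ H _; apply: H. Qed.

Lemma cocircuit_elim Z1 Z2 x : Z1 \in C -> Z2 \in C -> Z1 != vopp Z2 ->
  Z1 x != None -> Z1 x = sopp (Z2 x) ->
  exists2 Z, Z \in C & Z x = None /\ forall g, Z g != None -> Z g = Z1 g \/ Z g = Z2 g.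
Proof.
case: HOM => _ _ _ H Z1C Z2C Z12 Z1x Z12x; apply: H => //.
by rewrite inE Z1x Z12x eqxx.
Qed.

Lemma elim_weak Z1 Z2 x : Z1 \in C -> Z2 \in C -> ~ eq_pm Z1 Z2 ->
  Z1 x != None -> Z2 x != None ->
  exists2 Z, Z \in C & Z x = None /\ supp Z \subset supp Z1 :|: supp Z2.
Proof.
move=> Z1C Z2C Z12 Z1x Z2x.
have [Z12x|Z12x] := eqVneq (Z1 x) (Z2 x).
  have Z1x' : Z1 x = sopp (vopp Z2 x) by rewrite voppE soppK.
  have Z12' : Z1 != vopp (vopp Z2) by rewrite voppK; apply/eqP=> E; apply: Z12; left.
  have [Z ZC [Zx HZ]] := cocircuit_elim Z1C (cocircuit_vopp Z2C) Z12' Z1x Z1x'.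
  by exists Z; rewrite // -(supp_vopp Z2) agree_supp.
have Z12' : Z1 != vopp Z2 by apply/eqP=> E; apply: Z12; right.
have [Z ZC [Zx HZ]] := cocircuit_elim Z1C Z2C Z12' Z1x (sopp_of_neq Z1x Z2x Z12x).
by exists Z; rewrite // agree_supp.
Qed.

Lemma elim_strong Z1 Z2 x y : Z1 \in C -> Z2 \in C ->
  Z1 x != None -> Z2 x != None -> Z1 y != None -> Z2 y = None ->
  exists2 Z, Z \in C &
    [/\ Z x = None, Z y != None & supp Z \subset supp Z1 :|: supp Z2].
Proof.
(* Induction on #|supp Z1 :|: supp Z2|: the two recursive calls below work inside this
   union with y, resp. g, removed. *)
move: {2}#|_| (leqnn #|supp Z1 :|: supp Z2|) => n.
elim: n Z1 Z2 x y => [|n IH] Z1 Z2 x y Hn Z1C Z2C Z1x Z2x Z1y Z2y.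
  by move: Hn; rewrite leqn0 cards_eq0 => /eqP/setP/(_ x); rewrite !inE Z1x.
have [_ Z12] := not_eq_pm_at Z2y Z1y.
have [Z3 Z3C [Z3x sub3]] := elim_weak Z1C Z2C Z12 Z1x Z2x.
have [Z3y|Z3y] := eqVneq (Z3 y) None; last by exists Z3.
have /subsetPn [g Z3g Z1g] : ~~ (supp Z3 \subset supp Z1).
  apply: contraTN Z1x => /(cocircuit_supp_eq_pm Z3C Z1C) /eq_pm_eq0 /(_ x) <-.
  by rewrite Z3x.
move: Z3g Z1g; rewrite !inE negbK => Z3g /eqP Z1g.
have Z2g : Z2 g != None.
  by move/subsetP: sub3 => /(_ g); rewrite !inE Z3g Z1g => /(_ isT).
have sub23 : supp Z2 :|: supp Z3 \subset (supp Z1 :|: supp Z2) :\ y.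
  by apply/subUsetP; split; apply/subsetD1P; split; rewrite ?subsetUr ?inE ?Z2y ?Z3y.
have [Z4 Z4C [Z4g Z4x sub4]] : exists2 Z4, Z4 \in C &
    [/\ Z4 g = None, Z4 x != None & supp Z4 \subset supp Z2 :|: supp Z3].
  apply: IH Z2g Z3g Z2x Z3x => //; apply: leq_trans (subset_leq_card sub23) _.
  by move: Hn; rewrite (cardsD1 y) !inE Z1y.
have sub14 : supp Z1 :|: supp Z4 \subset (supp Z1 :|: supp Z2) :\ g.
  apply/subUsetP; split; apply/subsetD1P; split; rewrite ?subsetUl ?inE ?Z1g ?Z4g //.
  by rewrite (subset_trans sub4) // subUset subsetUr.
have Z4y : Z4 y = None.
  by have := subsetP sub4 y; rewrite !inE Z2y Z3y; case: (Z4 y) => // b /(_ isT).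
have [Z ZC [Zx Zy sub]] : exists2 Z, Z \in C &
    [/\ Z x = None, Z y != None & supp Z \subset supp Z1 :|: supp Z4].
  apply: IH Z1x Z4x Z1y Z4y => //; apply: leq_trans (subset_leq_card sub14) _.
  by move: Hn; rewrite (cardsD1 g) !inE Z2g orbT.
exists Z => //; split=> //; apply: subset_trans sub _.
by rewrite subUset subsetUl (subset_trans sub4) // subUset subsetUr.
Qed.

Lemma elim_at Z1 Z2 a : Z1 \in C -> Z2 \in C -> ~ eq_pm Z1 Z2 ->
  exists2 Z, Z \in C & Z a = None /\ supp Z \subset supp Z1 :|: supp Z2.
Proof.
move=> Z1C Z2C Z12.
have [Z1a|Z1a] := eqVneq (Z1 a) None; first by exists Z1; rewrite ?subsetUl.
have [Z2a|Z2a] := eqVneq (Z2 a) None; first by exists Z2; rewrite ?subsetUr.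
exact: elim_weak.
Qed.

Lemma elim_at2 Z1 Z2 Z3 e a b : Z1 \in C -> Z2 \in C -> Z3 \in C -> ~ eq_pm Z1 Z2 ->
  Z1 e = None -> Z2 e = None -> Z3 e != None ->
  exists2 Z, Z \in C &
    [/\ Z a = None, Z b = None & supp Z \subset supp Z1 :|: supp Z2 :|: supp Z3].
Proof.
(* Eliminate b between an a-elimination F1 of Z1, Z2 (which vanishes at e) and some F2
   vanishing at a but not at e, obtained from Z3 by strong elimination. *)
move=> Z1C Z2C Z3C Z12 Z1e Z2e Z3e; set S := _ :|: _ :|: _.
have sub12 : supp Z1 :|: supp Z2 \subset S by apply: subsetUl.
have sub3 : supp Z3 \subset S by apply: subsetUr.
have elim_b F1 F2 : F1 \in C -> F2 \in C -> ~ eq_pm F1 F2 ->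
    F1 a = None -> F2 a = None -> supp F1 :|: supp F2 \subset S ->
    exists2 Z, Z \in C & [/\ Z a = None, Z b = None & supp Z \subset S].
  move=> F1C F2C F12 F1a F2a sub; have [Z ZC [Zb subZ]] := elim_at b F1C F2C F12.
  exists Z => //; split=> //; last exact: subset_trans sub.
  by have := subsetP subZ a; rewrite !inE F1a F2a; case: (Z a) => // ? /(_ isT).
have [[Z1a Z2a]|[W [WC We Wa subW]]] : (Z1 a = None /\ Z2 a = None) \/
    exists W, [/\ W \in C, W e = None, W a != None & supp W \subset S].
  have [Z1a|Z1a] := eqVneq (Z1 a) None; last first.
    by right; exists Z1; rewrite (subset_trans _ sub12) ?subsetUl.
  have [Z2a|Z2a] := eqVneq (Z2 a) None; last first.
    by right; exists Z2; rewrite (subset_trans _ sub12) ?subsetUr.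
  by left.
exact: (elim_b Z1 Z2).
have [F1 F1C [F1a subF1]] := elim_at a Z1C Z2C Z12.
have F1e : F1 e = None.
  by have := subsetP subF1 e; rewrite !inE Z1e Z2e; case: (F1 e) => // ? /(_ isT).
have [F2 F2C [F2a F2e subF2]] : exists2 F2, F2 \in C &
    [/\ F2 a = None, F2 e != None & supp F2 \subset S].
  have [Z3a|Z3a] := eqVneq (Z3 a) None; first by exists Z3.
  have [F2 F2C [F2a F2e subF2]] := elim_strong Z3C WC Z3a Wa Z3e We.
  by exists F2; rewrite // (subset_trans subF2) // subUset sub3.
apply: elim_b F1C F2C _ F1a F2a _; first by case: (not_eq_pm_at F1e F2e).
by rewrite subUset subF2 (subset_trans subF1).
Qed.

Lemma exists_basis : exists B, basis C B.
Proof.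
have spanT : spanning C setT.
  apply/forall_inP=> Z /cocircuit_neq0 [x Zx].
  by apply/negP=> /disjointFr /(_ (in_setT x)); rewrite inE Zx.
case: (arg_minnP (fun B : {set T} => #|B|) spanT) => B spanB minB.
exists B; rewrite /basis spanB; apply/forall_inP=> B' /proper_card ltB'.
by apply/negP=> /minB; rewrite leqNgt ltB'.
Qed.

Lemma exists_spanning_diff A k : rank C A + k = rankOM C ->
  exists B, spanning C B /\ #|B :\: A| <= k.
Proof.
have [B0 basisB0] := exists_basis.
pose P B := indep C B && (B \subset A).
have P0 : P set0.
  by rewrite /P sub0set andbT; apply/existsP; exists B0; rewrite basisB0 sub0set.
rewrite /rank (bigmax_eq_arg _ P0); case: arg_maxnP => // Bw.
move=> /andP[/existsP[B /andP[basisB sBwB]] sBwA] _ rk.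
exists B; split; first by case/andP: basisB.
have leB : #|B| <= rankOM C.
  apply: (@leq_bigmax_cond _ (fun B => indep C B && (B \subset setT)) (fun B => #|B|)).
  by rewrite subsetT andbT; apply/existsP; exists B; rewrite basisB subxx.
have leBw : #|Bw| <= #|B :&: A| by apply: subset_leq_card; rewrite subsetI sBwB sBwA.
have := cardsID A B; lia.
Qed.

Lemma coline_cocircuits_eq_pm (L : {set T}) Z1 Z2 Z3 e :
  rank C L + 2 = rankOM C -> Z1 \in C -> Z2 \in C -> Z3 \in C ->
  L \subset zset Z1 -> L \subset zset Z2 -> L \subset zset Z3 ->
  Z1 e = None -> Z2 e = None -> Z3 e != None -> eq_pm Z1 Z2.
Proof.
move=> rkL Z1C Z2C Z3C L1 L2 L3 Z1e Z2e Z3e.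
have [->|Z12] := eqVneq Z1 Z2; first by left.
have [->|Z12'] := eqVneq Z1 (vopp Z2); first by right.
exfalso; have {Z12'}Z12 : ~ eq_pm Z1 Z2 by case=> /eqP; apply/negP.
have [B [spanB cardBL]] := exists_spanning_diff rkL.
(* A cocircuit vanishing on L and on the (at most two) elements of B :\: L would miss B. *)
pose s := enum (B :\: L).
have [Z ZC [Z0 Z1' subZ]] := elim_at2 (nth e s 0) (nth e s 1) Z1C Z2C Z3C Z12 Z1e Z2e Z3e.
have := forall_inP spanB Z ZC; rewrite disjoint_subset => /subsetPn [x xB].
rewrite !inE negbK => Zx.
have xL : x \notin L.
  apply/negP=> xL; have := subsetP subZ x; rewrite !inE Zx.
  move: (subsetP L1 x xL) (subsetP L2 x xL) (subsetP L3 x xL).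
  by rewrite !inE => /eqP-> /eqP-> /eqP-> /(_ isT).
have xs : x \in s by rewrite mem_enum inE xL xB.
have : index x s < 2 by apply: leq_trans cardBL; rewrite cardE index_mem.
rewrite -(nth_index e xs) in Zx.
by case: (index x s) Zx => [|[|n]] Zx //; rewrite ?Z0 ?Z1' in Zx.
Qed.

End OrientedMatroid.

Section Lexicographic.
Variables (E : finType) (I : seq E).

Lemma lexsig_nth x0 (Z : svec E) j : j < size I ->
  (forall k, k < j -> Z (nth x0 I k) = None) -> Z (nth x0 I j) != None ->
  lexsig I Z = Z (nth x0 I j).
Proof.
move=> ltj Zbefore Zj; rewrite /lexsig.
case: findP => [/hasPn/(_ _ (mem_nth x0 ltj))|k ltk Zk Zbeforek]; first by rewrite Zj.
case: (ltngtP k j) => [/Zbefore/eqP|/(Zbeforek x0)|->]; last by rewrite (nth_map x0).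
  by rewrite (negbTE (Zk x0)).
by rewrite (negbTE Zj).
Qed.

Lemma lexsig_eq0 (Z : svec E) : lexsig I Z = None -> {in I, forall e, Z e = None}.
Proof.
move=> + e eI; rewrite /lexsig; case: findP => [/hasPn/(_ e eI)/negPn/eqP //|k ltk Zk _].
by rewrite (nth_map e) // => /eqP; rewrite (negbTE (Zk e)).
Qed.

Lemma cindex_nth x0 (X : svec (option E)) j : cindex I X = j.+1 -> j < size I ->
  (forall k, k < j -> X (Some (nth x0 I k)) = None) /\ X (Some (nth x0 I j)) != None.
Proof.
rewrite /cindex => -[<-]; case: findP => [_|k _ Xk Xbefore _]; first by rewrite ltnn.
by split=> [k' /(Xbefore x0)/negbFE/eqP|].
Qed.

End Lexicographic.

Section SingleExtension.
Variables (E : finType) (C : {set svec E}) (C' : {set svec (option E)}).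
Variable sigma : svec E -> sign.
Hypothesis Hext : single_ext C C' sigma.
Implicit Types W : svec (option E).

Lemma single_ext_OM : is_OM C'. Proof. by case: Hext. Qed.

Lemma restrE W e : restr W e = W (Some e). Proof. by rewrite ffunE. Qed.

Lemma extvE (V : svec E) s o : extv V s o = if o is Some e then V e else s.
Proof. by rewrite ffunE. Qed.

Lemma sigma_restr W : W \in C' -> restr W \in C -> W None = sigma (restr W).
Proof.
move=> WC VC; case: Hext => OM' defC extC; set V := restr W.
have W'C := extC V VC; set W' := extv V (sigma V) in W'C.
have sub W1 W2 : (forall e, W1 (Some e) = W2 (Some e)) ->
    (W1 None != None -> W2 None != None) -> supp W1 \subset supp W2.
  by move=> eq12 imp12; apply/subsetP=> -[e|]; rewrite !inE ?eq12 //; apply: imp12.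
have agree e : W (Some e) = W' (Some e) by rewrite extvE /V restrE.
have WW' : eq_pm W W'.
  have [Wp|Wp] := eqVneq (W None) None.
    by apply: (cocircuit_supp_eq_pm OM') => //; apply: sub => //; rewrite Wp.
  have [sV|sV] := eqVneq (sigma V) None; last first.
    by apply: (cocircuit_supp_eq_pm OM') => //; apply: sub => // _; rewrite extvE.
  have /eq_pm_eq0/(_ None) : eq_pm W' W.
    apply: (cocircuit_supp_eq_pm OM') => //.
    by apply: sub => // [e|]; rewrite ?agree // extvE sV.
  by rewrite extvE sV eqxx (negbTE Wp).
case: WW' => [-> | WW']; first by rewrite extvE.
have : V != vzero by case: (defC V) => /(_ VC) [].
case/negP; apply/eqP/ffunP=> e; rewrite [vzero e]ffunE /V restrE.
move/ffunP: WW' => /(_ (Some e)); rewrite voppE -agree.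
by case: (W (Some e)) => [[]|].
Qed.

Lemma restr_cocircuit_p W e : W \in C' -> W None != None -> W (Some e) != None ->
  restr W \in C.
Proof.
move=> WC Wp We; case: Hext => OM' defC _; apply/defC; split.
- by apply: contraNneq We => /ffunP/(_ e); rewrite restrE ffunE => ->.
- by exists W.
move=> W' W'C /properP [sub [g]]; rewrite !inE !restrE negbK => Wg /eqP W'g; exfalso.
have W'sub e' : W' (Some e') != None -> W (Some e') != None.
  by have := subsetP sub e'; rewrite !inE !restrE.
have [W'p|W'p] := eqVneq (W' None) None.
  have /eq_pm_eq0/(_ (Some g)) : eq_pm W' W.
    apply: (cocircuit_supp_eq_pm OM') => //.
    by apply/subsetP=> -[e'|]; rewrite !inE ?W'p //; apply: W'sub.
  by rewrite W'g eqxx (negbTE Wg).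
(* Eliminating p between W and W' signed oppositely at p gives a cocircuit whose support
   lies in supp W but misses p. *)
pose W'' := if W' None == sopp (W None) then W' else vopp W'.
have W''C : W'' \in C' by rewrite /W''; case: ifP; rewrite ?(cocircuit_vopp OM').
have W''p : W None = sopp (W'' None).
  rewrite /W''; case: ifP => [/eqP->|/negbT W'pW]; first by rewrite soppK.
  by rewrite voppE (sopp_of_neq W'p _ W'pW) ?soppK // sopp_eq0.
have W''g : W'' (Some g) = None by rewrite /W''; case: ifP; rewrite ?voppE W'g.
have nW : W != vopp W''.
  by apply/eqP=> WW''; case: (not_eq_pm_at W''g Wg) => _; apply; right.
have [Z ZC [Zp HZ]] := cocircuit_elim OM' WC W''C nW Wp W''p.
have /eq_pm_eq0/(_ None) : eq_pm Z W.
  apply: (cocircuit_supp_eq_pm OM') => //.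
  apply/subsetP=> -[e'|]; rewrite !inE ?Zp // => Ze'.
  case: (HZ _ Ze') => ZW; move: Ze'; rewrite ZW // /W''.
  by case: ifP; rewrite ?voppE ?sopp_eq0 => _; apply: W'sub.
by rewrite Zp eqxx (negbTE Wp).
Qed.

Lemma restr_cocircuit_p0 W : W \in C' -> W None = None ->
  (forall W', W' \in C' -> (forall e, W (Some e) = None -> W' (Some e) = None) ->
     W' None = None) ->
  restr W \in C.
Proof.
move=> WC Wp Wmin; case: Hext => OM' defC _; apply/defC; split.
- have [[e|] We] := cocircuit_neq0 OM' WC; last by rewrite Wp in We.
  by apply: contraNneq We => /ffunP/(_ e); rewrite restrE ffunE => ->.
- by exists W.
move=> W' W'C /properP [sub [g]]; rewrite !inE !restrE negbK => Wg /eqP W'g; exfalso.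
have W'zero e : W (Some e) = None -> W' (Some e) = None.
  move=> We; have := subsetP sub e; rewrite !inE !restrE We.
  by case: (W' (Some e)) => // ? /(_ isT).
have /eq_pm_eq0/(_ (Some g)) : eq_pm W' W.
  apply: (cocircuit_supp_eq_pm OM') => //.
  by apply/subsetP=> -[e|]; rewrite !inE ?(Wmin W' W'C W'zero) //; apply/contra_neq/W'zero.
by rewrite W'g eqxx (negbTE Wg).
Qed.

End SingleExtension.

Section LexicographicExtension.
Variables (E : finType) (C : {set svec E}) (I : seq E) (C' : {set svec (option E)}).
Variables (X Y : svec (option E)) (i : nat) (f : E).
Hypothesis Hext : single_ext C C' (lexsig I).
Hypotheses (XC : X \in C') (YC : Y \in C') (XYconf : conformal X Y).
Hypotheses (XYp : X None = Y None) (Xp : X None != None).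
Let L := zset (vcomp X Y).
Hypothesis rkL : rank C' L + 2 = rankOM C'.
Hypothesis i_range : 0 < i <= size I.
Hypotheses (iX : cindex I X = i) (iY : cindex I Y = i).
Let ei := Some (nth f I i.-1).
Let nXoY := vcomp (vopp X) Y.
Let OM' : is_OM C' := single_ext_OM Hext.
Implicit Types Z : svec (option E).

Lemma conformal_eq h : X h != None -> Y h != None -> Y h = X h.
Proof.
move: XYconf => /eqP/setP/(_ h); rewrite /sep !inE.
by case: (X h) => [[]|]; case: (Y h) => [[]|].
Qed.

Lemma notin_sep_zero h : h \notin sep (vopp X) Y -> X h = None \/ Y h = None.
Proof.
move: XYconf => /eqP/setP/(_ h); rewrite in_sep_vopp /sep !inE.
by case: (X h) => [[]|]; case: (Y h) => [[]|]; auto.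
Qed.

Lemma in_coline h : (h \in L) = (X h == None) && (Y h == None).
Proof. by rewrite in_zset ffunE; case: (X h). Qed.

Lemma p_notin_coline : None \notin L. Proof. by rewrite in_coline negb_and Xp. Qed.

Lemma coline_zsetX : L \subset zset X.
Proof. by apply/subsetP=> h; rewrite in_coline in_zset => /andP[]. Qed.

Lemma coline_zsetY : L \subset zset Y.
Proof. by apply/subsetP=> h; rewrite in_coline in_zset => /andP[]. Qed.

Lemma coline_eq_pm Z1 Z2 e : Z1 \in C' -> Z2 \in C' ->
  L \subset zset Z1 -> L \subset zset Z2 -> e \notin L ->
  Z1 e = None -> Z2 e = None -> eq_pm Z1 Z2.
Proof.
move=> Z1C Z2C L1 L2; rewrite in_coline negb_and => /orP[] Ze Z1e Z2e.
- exact: coline_cocircuits_eq_pm rkL Z1C Z2C XC L1 L2 coline_zsetX Z1e Z2e Ze.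
- exact: coline_cocircuits_eq_pm rkL Z1C Z2C YC L1 L2 coline_zsetY Z1e Z2e Ze.
Qed.

Lemma coline_zero Z1 Z2 e x : Z1 \in C' -> Z2 \in C' ->
  L \subset zset Z1 -> L \subset zset Z2 -> e \notin L ->
  Z1 e = None -> Z2 e = None -> Z1 x = None -> Z2 x = None.
Proof.
move=> Z1C Z2C L1 L2 eL Z1e Z2e /eqP.
by rewrite (eq_pm_eq0 (coline_eq_pm Z1C Z2C L1 L2 eL Z1e Z2e)) => /eqP.
Qed.

Lemma coline_agree Z Z1 Z2 : L \subset zset Z1 -> L \subset zset Z2 ->
  (forall g, Z g != None -> Z g = Z1 g \/ Z g = Z2 g) -> L \subset zset Z.
Proof.
move=> L1 L2 /agree_supp sub; apply/subsetP=> h hL; rewrite in_zset.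
move: (subsetP L1 h hL) (subsetP L2 h hL) (subsetP sub h).
by rewrite !in_zset !in_setU !in_supp => /eqP-> /eqP->; case: (Z h) => // ? /(_ isT).
Qed.

Lemma coline_zsetU Z : Z = vopp X \/ Z = Y -> L \subset zset Z.
Proof. by case=> ->; rewrite ?zset_vopp ?coline_zsetX ?coline_zsetY. Qed.

Lemma notin_sep_nXoY h Z : h \notin sep (vopp X) Y -> Z = vopp X \/ Z = Y ->
  Z h != None -> Z h = nXoY h.
Proof.
move=> hsep; rewrite ffunE voppE; case=> ->; rewrite ?voppE; first by case: (X h).
by case: (notin_sep_zero hsep) => ->.
Qed.

(* [is_elim e Z]: Z is the cocircuit [elim C' (vopp X) Y e] used by [Dir]. *)
Definition is_elim e Z := [/\ Z \in C', Z e = None &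
  forall h, h \notin sep (vopp X) Y -> Z h = nXoY h].

Lemma is_elim_coline e Z : is_elim e Z -> L \subset zset Z.
Proof.
case=> _ _ HZ; apply/subsetP=> h; rewrite in_coline in_zset => /andP[/eqP Xh /eqP Yh].
rewrite HZ; last by rewrite in_sep_vopp Xh.
by rewrite /nXoY ffunE voppE Xh Yh.
Qed.

Lemma Dir_self a b : X a != None -> Dir C' a b X X = None.
Proof.
move=> Xa; rewrite /Dir Xa eqxx /elim.
case: pickP => // Z /andP[ZC /andP[/eqP Za /forallP HZ]].
have /eq_pm_eq0/(_ a) : eq_pm Z X.
  apply: (cocircuit_supp_eq_pm OM') => //; apply/subsetP=> x; rewrite !in_supp.
  apply: contraNneq => Xx; move/implyP: (HZ x).
  by rewrite in_sep_vopp Xx ffunE voppE Xx; apply.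
by rewrite Za eqxx (negbTE Xa).
Qed.

Lemma ei_index : i.-1 < size I.
Proof. by case/andP: i_range => i_gt0; rewrite prednK. Qed.

Lemma cindex_ei Z : cindex I Z = i ->
  (forall k, k < i.-1 -> Z (Some (nth f I k)) = None) /\ Z ei != None.
Proof.
by move=> iZ; case/andP: i_range => i_gt0 le_i; apply: cindex_nth; rewrite prednK.
Qed.

Lemma X_ei : X ei != None. Proof. by case: (cindex_ei iX). Qed.

Lemma Y_ei : Y ei = X ei.
Proof. by apply: conformal_eq X_ei _; case: (cindex_ei iY). Qed.

Lemma ei_notin_coline : ei \notin L. Proof. by rewrite in_coline negb_and X_ei. Qed.

Lemma prefix_in_coline k : k < i.-1 -> Some (nth f I k) \in L.
Proof.
move=> lt_k; case: (cindex_ei iX) => /(_ k lt_k) Xk _.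
by case: (cindex_ei iY) => /(_ k lt_k) Yk _; rewrite in_coline Xk Yk.
Qed.

Lemma coline_p_eq_ei V : V \in C' -> L \subset zset V -> V None != None -> V ei != None ->
  V None = V ei.
Proof.
move=> VC VL Vp Vei; have VC0 := restr_cocircuit_p Hext VC Vp Vei.
rewrite (sigma_restr Hext VC VC0) (lexsig_nth (x0 := f) ei_index) ?restrE //.
by move=> k /prefix_in_coline /(subsetP VL); rewrite restrE in_zset => /eqP.
Qed.

Lemma elim_p_ei_zero Zp g : is_elim None Zp -> Zp (Some g) = None -> Some g \notin L ->
  Zp ei = None.
Proof.
move=> pZp Zpg gL; have ZpL := is_elim_coline pZp; case: pZp => ZpC Zpp _.
(* Zp is, up to sign, the only cocircuit vanishing on L and at g; so its restriction is a
   cocircuit of O, whose localization 0 = Zp p forces it to vanish on all of I. *)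
have restrC : restr Zp \in C.
  apply: (restr_cocircuit_p0 Hext ZpC Zpp) => W WC Wzero.
  have WL : L \subset zset W.
    apply/subsetP=> -[e|] hL; last by move: p_notin_coline; rewrite hL.
    by rewrite in_zset Wzero //; apply/eqP; rewrite -in_zset (subsetP ZpL).
  exact: coline_zero ZpC WC ZpL WL gL Zpg (Wzero _ Zpg) Zpp.
have := sigma_restr Hext ZpC restrC; rewrite Zpp => /esym/lexsig_eq0.
by move=> /(_ (nth f I i.-1)); rewrite restrE; apply; apply: mem_nth ei_index.
Qed.

Lemma elim_opp_sign_p_ei Zi Zp g : is_elim ei Zi -> is_elim None Zp ->
  Zp ei != None -> Zi g != None -> Zp g != None -> Zi g != Zp g ->
  Zi None = Zp ei.
Proof.
move=> eiZi pZp Zpei Zig Zpg Zigp.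
have ZiL := is_elim_coline eiZi; have ZpL := is_elim_coline pZp.
case: eiZi => ZiC Ziei _; case: pZp => ZpC Zpp _.
have nZ : Zi != vopp Zp.
  by apply/eqP=> ZiZp; case: (not_eq_pm_at Ziei Zpei) => + _; apply; right.
have [V VC [Vg HV]] := cocircuit_elim OM' ZiC ZpC nZ Zig (sopp_of_neq Zig Zpg Zigp).
have VL := coline_agree ZiL ZpL HV.
have Vei : V ei != None.
  apply: contraNneq Zig => Vei.
  by rewrite (coline_zero VC ZiC VL ZiL ei_notin_coline Vei Ziei Vg).
have Vp : V None != None.
  apply: contraNneq Zpg => Vp.
  by rewrite (coline_zero VC ZpC VL ZpL p_notin_coline Vp Zpp Vg).
have <- : V None = Zi None by case: (HV _ Vp) => // VZp; rewrite VZp Zpp in Vp.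
have <- : V ei = Zp ei by case: (HV _ Vei) => // VZi; rewrite VZi Ziei in Vei.
exact: coline_p_eq_ei VC VL Vp Vei.
Qed.

Lemma elim_f_ei_p Zi Zp Zf : is_elim ei Zi -> is_elim None Zp -> is_elim (Some f) Zf ->
  Zi (Some f) != None -> Zi (Some f) = Zp (Some f) -> Zf ei = Zf None.
Proof.
move=> eiZi pZp fZf Zif ZiZp.
have ZiL := is_elim_coline eiZi; have ZpL := is_elim_coline pZp.
have ZfL := is_elim_coline fZf.
case: eiZi pZp fZf => ZiC Ziei _ [ZpC Zpp _] [ZfC Zff _].
have Zpf : Zp (Some f) != None by rewrite -ZiZp.
have Zfei : Zf ei != None.
  apply: contraNneq Zif => Zfei.
  by rewrite (coline_zero ZfC ZiC ZfL ZiL ei_notin_coline Zfei Ziei Zff).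
have Zfp : Zf None != None.
  apply: contraNneq Zpf => Zfp.
  by rewrite (coline_zero ZfC ZpC ZfL ZpL p_notin_coline Zfp Zpp Zff).
exact/esym/coline_p_eq_ei.
Qed.

Section Distinct.
Hypothesis XneY : X != Y.

Lemma exists_nXoY_notin_sep : exists2 h, h \notin sep (vopp X) Y & nXoY h != None.
Proof.
have /existsP [h XYh] : [exists h, X h != Y h].
  apply: contraNT XneY => /existsPn XY.
  by apply/eqP/ffunP=> h; apply/eqP; rewrite -[_ == _]negbK.
exists h; first by rewrite in_sep_vopp (negbTE XYh) andbF.
by move: XYh; rewrite /nXoY ffunE voppE; case: (X h) => [[]|] //=; case: (Y h).
Qed.

Lemma is_elim_uniq e Z1 Z2 : X e != None -> is_elim e Z1 -> is_elim e Z2 -> Z1 = Z2.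
Proof.
move=> Xe ez1 ez2; have [Z1C Z1e HZ1] := ez1; have [Z2C Z2e HZ2] := ez2.
have eL : e \notin L by rewrite in_coline negb_and Xe.
case: (coline_eq_pm Z1C Z2C (is_elim_coline ez1) (is_elim_coline ez2) eL Z1e Z2e) => // Z12.
have [h hsep XYh] := exists_nXoY_notin_sep.
move/ffunP: Z12 => /(_ h); rewrite voppE !(HZ1, HZ2) // => /esym/sopp_fix.
by move/eqP; rewrite (negbTE XYh).
Qed.

Lemma exists_is_elim e : X e != None -> Y e = X e -> exists Z, is_elim e Z.
Proof.
move=> Xe Ye.
have nXY : vopp X != vopp Y.
  by apply: contraNneq XneY => nXY; rewrite -[X]voppK nXY voppK.
have nXe : vopp X e != None by rewrite voppE sopp_eq0.
have nXYe : vopp X e = sopp (Y e) by rewrite voppE Ye.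
have [Z ZC [Ze HZ]] := cocircuit_elim OM' (cocircuit_vopp OM' XC) YC nXY nXe nXYe.
have ZL : L \subset zset Z.
  by apply: coline_agree (coline_zsetU (or_introl erefl)) coline_zsetY HZ.
exists Z; split=> // h hsep.
have [Zh|Zh] := eqVneq (Z h) None; last first.
  by case: (HZ h Zh) => ZU; rewrite ZU in Zh *; apply: notin_sep_nXoY => //; auto.
(* Otherwise Z would vanish at h together with one of X, Y, hence agree with it up to sign. *)
rewrite Zh; apply/esym/eqP; apply: contraT => nXoYh.
have hL : h \notin L.
  by move: nXoYh; rewrite in_coline /nXoY ffunE voppE; case: (X h); case: (Y h).
case: (notin_sep_zero hsep) => [Xh|Yh].
- by rewrite (coline_zero ZC XC ZL coline_zsetX hL Zh Xh Ze) in Xe.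
- by rewrite -Ye (coline_zero ZC YC ZL coline_zsetY hL Zh Yh Ze) in Xe.
Qed.

Lemma Dir_is_elim a b Z : X a != None -> Y a = X a -> is_elim a Z ->
  Dir C' a b X Y = Z b.
Proof.
move=> Xa Ya aZ; rewrite /Dir Xa Ya eqxx /elim.
case: pickP => [Z' /andP[Z'C /andP[/eqP Z'a /forallP HZ']]|noZ].
  suff -> : Z' = Z by [].
  by apply: (is_elim_uniq Xa _ aZ); split=> // h hsep; apply/eqP/(implyP (HZ' h)).
case: aZ => ZC Za HZ; move: (noZ Z); rewrite ZC Za eqxx /=.
by move/negbT/forallPn=> [h]; rewrite negb_imply => /andP[hsep /eqP[]]; rewrite HZ.
Qed.

Lemma elim_ei_p_neq Zi Zp : is_elim ei Zi -> is_elim None Zp -> Zi None != None ->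
  Zi None != Zp ei.
Proof.
move=> eiZi pZp Zip; apply/eqP=> ZiZp.
have ZiL := is_elim_coline eiZi; have ZpL := is_elim_coline pZp.
case: eiZi => ZiC Ziei HZi; case: pZp => ZpC Zpp HZp.
have Xpei := coline_p_eq_ei XC coline_zsetX Xp X_ei.
(* U is the one of the two composed cocircuits -X, Y with sign opposite to Zi at p. *)
have [U UXY Up] : exists2 U, U = vopp X \/ U = Y & U None = sopp (Zi None).
  have [ZiX|ZiX] := eqVneq (Zi None) (X None).
    by exists (vopp X); [left|rewrite voppE ZiX].
  by exists Y; [right|rewrite -XYp (sopp_of_neq Zip Xp ZiX) soppK].
have UC : U \in C' by case: UXY => ->; rewrite ?(cocircuit_vopp OM').
have UL := coline_zsetU UXY.
have Uei : U ei = U None by case: UXY => ->; rewrite ?voppE ?Y_ei -?XYp Xpei.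
have Uei0 : U ei != None by rewrite Uei Up sopp_eq0.
have nZiU : Zi != vopp U.
  by apply/eqP=> ZiU; case: (not_eq_pm_at Ziei Uei0) => + _; apply; right.
have ZiUp : Zi None = sopp (U None) by rewrite Up soppK.
have [V VC [Vp HV]] := cocircuit_elim OM' ZiC UC nZiU Zip ZiUp.
have VL := coline_agree ZiL UL HV.
case: (coline_eq_pm VC ZpC VL ZpL p_notin_coline Vp Zpp) => VZp.
- (* V ei would be both Zi p and U ei = - Zi p. *)
  have Vei : V ei = Zi None by rewrite VZp ZiZp.
  have Vei0 : V ei != None by rewrite Vei.
  have Zi_fix : Zi None = sopp (Zi None).
    by rewrite -Up -Uei -Vei; case: (HV _ Vei0) => // VZi; rewrite VZi Ziei in Vei0.
  by rewrite (sopp_fix (esym Zi_fix)) in Zip.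
- (* Where -X o Y is nonzero off sep, Zi and Zp agree with it and U is 0 or agrees too,
     so V = -Zp cannot lie between Zi and U. *)
  have [h hsep XYh] := exists_nXoY_notin_sep.
  have Vh : V h = sopp (nXoY h) by rewrite VZp voppE HZp.
  have Vh0 : V h != None by rewrite Vh sopp_eq0.
  have nXoY_fix : sopp (nXoY h) != nXoY h by apply: contra_neq XYh => /sopp_fix.
  case: (HV _ Vh0) => [|VU]; first by rewrite Vh HZi //; apply/eqP.
  have := notin_sep_nXoY hsep UXY; rewrite -VU => /(_ Vh0).
  by rewrite Vh; apply/eqP.
Qed.

Lemma elim_ei_p_agree Zi Zp : is_elim ei Zi -> is_elim None Zp ->
  X (Some f) != Y (Some f) \/ (X (Some f) = None /\ Y (Some f) = None) \/
    Zi (Some f) != None ->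
  Zi (Some f) = Zp (Some f).
Proof.
move=> eiZi pZp hf; have ZiL := is_elim_coline eiZi; have ZpL := is_elim_coline pZp.
have [Zip|Zip] := eqVneq (Zi None) None.
  by rewrite (is_elim_uniq Xp (_ : is_elim None Zi) pZp) //; case: eiZi.
have [Zpei|Zpei] := eqVneq (Zp ei) None.
  by rewrite (is_elim_uniq X_ei eiZi (_ : is_elim ei Zp)) //; case: pZp.
have [ZiC Ziei _] := eiZi; have [ZpC Zpp _] := pZp.
have notinL Z : L \subset zset Z -> Z (Some f) != None -> Some f \notin L.
  by move=> ZL; apply: contraNN => /(subsetP ZL); rewrite in_zset.
have [Zif|Zif] := eqVneq (Zi (Some f)) None; have [Zpf|Zpf] := eqVneq (Zp (Some f)) None.
- by rewrite Zif Zpf.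
- (* Zi would vanish at f together with X or Y, hence at ei as well. *)
  have fL := notinL _ ZpL Zpf.
  have [W [WC WL Wf Wei]] : exists W,
      [/\ W \in C', L \subset zset W, W (Some f) = None & W ei != None].
    case: hf => [XYf|[[Xf Yf]|]]; last by rewrite Zif eqxx.
    + have [Xf|Xf] := eqVneq (X (Some f)) None; first by exists X; rewrite X_ei coline_zsetX.
      exists Y; split; rewrite ?Y_ei ?X_ei ?coline_zsetY //.
      by apply: contraNeq XYf => Yf; rewrite (conformal_eq Xf Yf).
    + by rewrite in_coline Xf Yf in fL.
  by rewrite (coline_zero ZiC WC ZiL WL fL Zif Wf Ziei) in Wei.
- by rewrite (elim_p_ei_zero _ Zpf (notinL _ ZiL Zif)) ?eqxx in Zpei.
have [//|Zifp] := eqVneq (Zi (Some f)) (Zp (Some f)).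
have := elim_ei_p_neq eiZi pZp Zip.
by rewrite (elim_opp_sign_p_ei eiZi pZp Zpei Zif Zpf Zifp) eqxx.
Qed.

End Distinct.

Lemma Dir_ei_p :
  X (Some f) != Y (Some f) \/ (X (Some f) = None /\ Y (Some f) = None) \/
    Dir C' ei (Some f) X Y != None ->
  Dir C' ei (Some f) X Y = Dir C' None (Some f) X Y.
Proof.
have [<-|XneY] := eqVneq X Y; first by rewrite !Dir_self ?X_ei.
have [Zi eiZi] := exists_is_elim XneY X_ei Y_ei.
have [Zp pZp] := exists_is_elim XneY Xp (esym XYp).
rewrite !(Dir_is_elim XneY _ X_ei Y_ei eiZi) (Dir_is_elim XneY _ Xp (esym XYp) pZp).
exact: elim_ei_p_agree.
Qed.

Lemma Dir_f_ei_p :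
  X (Some f) != Y (Some f) \/ (X (Some f) = None /\ Y (Some f) = None) \/
    Dir C' ei (Some f) X Y != None ->
  X (Some f) = Y (Some f) -> X (Some f) != None ->
  Dir C' (Some f) ei X Y = Dir C' (Some f) None X Y.
Proof.
move=> hf XYf Xf; have [<-|XneY] := eqVneq X Y; first by rewrite !Dir_self.
have [Zi eiZi] := exists_is_elim XneY X_ei Y_ei.
have [Zp pZp] := exists_is_elim XneY Xp (esym XYp).
have [Zf fZf] := exists_is_elim XneY Xf (esym XYf).
rewrite !(Dir_is_elim XneY _ Xf (esym XYf) fZf).
have Zif : Zi (Some f) != None.
  case: hf => [|[[Xf0 _]|]]; first by rewrite XYf eqxx.
  - by rewrite Xf0 in Xf.
  - by rewrite (Dir_is_elim XneY _ X_ei Y_ei eiZi).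
apply: (elim_f_ei_p eiZi pZp fZf Zif).
by apply: (elim_ei_p_agree XneY eiZi pZp); auto.
Qed.

End LexicographicExtension.

Theorem lemma3p5 (E : finType) (C : {set svec E}) (r : nat) (f : E)
    (I : seq E) (C' : {set svec (option E)}) (X Y : svec (option E)) (i : nat) :
  let p : option E := None in
  is_OM C -> rankOM C = r ->
  uniq I -> indep C [set e in I] -> size I <= r ->
  single_ext C C' (lexsig I) ->
  X \in C' -> Y \in C' -> conformal X Y ->
  X p = Y p -> X p != None ->
  edge C' (vcomp X Y) ->
  1 <= i <= size I ->
  let ei := nth f I i.-1 in
  f != ei ->
  cindex I X = i -> cindex I Y = i ->
  (X (Some f) != Y (Some f) \/ (X (Some f) = None /\ Y (Some f) = None)
     \/ Dir C' (Some ei) (Some f) X Y != None) ->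
  Dir C' (Some ei) (Some f) X Y = Dir C' p (Some f) X Y /\
  (X (Some f) = Y (Some f) -> X (Some f) != None ->
     Dir C' (Some f) (Some ei) X Y = Dir C' (Some f) p X Y).
Proof.
move=> p _ _ _ _ _ Hext XC YC XYconf XYp Xp [_ rkL] i_range ei _ iX iY hf; split.
- exact: (Dir_ei_p Hext XC YC XYconf XYp Xp rkL i_range iX iY hf).
- exact: (Dir_f_ei_p Hext XC YC XYconf XYp Xp rkL i_range iX iY hf).
Qed.
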